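(* Let $\mathbb{F}_d$ be a field with the discrete topology, let $G$ be an effective ample Hausdorff groupoid, and let $\sigma\colon G^{(2)} \to \mathbb{F}_d^\times$ be a continuous $2$-cocycle. Then $A_{\mathbb{F}_d}(G,\sigma)$ is simple if and only if $G$ is minimal.
   Context: Groupoids are locally compact Hausdorff topological groupoids; $G$ is ample if it has a basis of compact open bisections; $G$ is effective if the interior of its isotropy $\{\gamma : r(\gamma) = s(\gamma)\}$ equals $G^{(0)}$. A subset $U \subseteq G^{(0)}$ is invariant if for all $\gamma\in G$, $s(\gamma)\in U \iff r(\gamma)\in U$; $G$ is minimal if $G^{(0)}$ has no open invariant subsets other than $\varnothing$ and $G^{(0)}$. A continuous $2$-cocycle is a continuous (locally constant) $\sigma\colon G^{(2)} \to \mathbb{F}_d^\times$ with $\sigma(\alpha,\beta)\sigma(\alpha\beta,\gamma) = \sigma(\alpha,\beta\gamma)\sigma(\beta,\gamma)$ and $\sigma(r(\gamma),\gamma)=1=\sigma(\gamma,s(\gamma))$. $A_{\mathbb{F}_d}(G,\sigma)$ is the $\mathbb{F}_d$-algebra of locally constant compactly supported functions $G\to\mathbb{F}_d$ with multiplication $(fg)(\gamma) = \sum_{\alpha\beta=\gamma}\sigma(\alpha,\beta)f(\alpha)g(\beta)$; simple means it has no two-sided ideals other than $\{0\}$ and itself. *)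

From HB Require Import structures.
From mathcomp Require Import all_boot all_order all_algebra.
From mathcomp Require Import all_classical all_reals all_analysis.
Set Implicit Arguments. Unset Strict Implicit. Unset Printing Implicit Defensive.
Import Order.TTheory GRing.Theory Num.Theory.
Local Open Scope classical_set_scope.
Local Open Scope ring_scope.

(* An (algebraic) groupoid on the carrier G: range r, source s, a product
   [mul a b] that is meaningful when s a = r b, and an inverse.  The unit
   space G^(0) is the set of elements fixed by r. *)
Record groupoid (G : Type) := Groupoid {
  gsrc : G -> G;
  grng : G -> G;
  gmul : G -> G -> G;
  ginv : G -> G;
  grng_rng : forall x, grng (grng x) = grng x;
  gsrc_rng : forall x, gsrc (grng x) = grng x;
  grng_src : forall x, grng (gsrc x) = gsrc x;
  gsrc_mul : forall a b, gsrc a = grng b -> gsrc (gmul a b) = gsrc b;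
  grng_mul : forall a b, gsrc a = grng b -> grng (gmul a b) = grng a;
  gmulA : forall a b c, gsrc a = grng b -> gsrc b = grng c ->
    gmul (gmul a b) c = gmul a (gmul b c);
  gmul_rngl : forall a, gmul (grng a) a = a;
  gmul_srcr : forall a, gmul a (gsrc a) = a;
  gsrc_inv : forall a, gsrc (ginv a) = grng a;
  grng_inv : forall a, grng (ginv a) = gsrc a;
  gmulV : forall a, gmul a (ginv a) = grng a;
  gmulVl : forall a, gmul (ginv a) a = gsrc a
}.

Section GroupoidDefs.
Context {G : topologicalType} (Gp : groupoid G).

Definition composable (a b : G) : Prop := gsrc Gp a = grng Gp b.
Definition G2 : set (G * G) := [set p | composable p.1 p.2].

Definition units : set G := [set x | grng Gp x = x].

Definition open_in_units (U : set G) : Prop :=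
  exists V : set G, open V /\ U = V `&` units.

Definition topological_groupoid : Prop :=
  continuous (gsrc Gp) /\ continuous (grng Gp) /\ continuous (ginv Gp) /\
  {within G2, continuous (fun p : G * G => gmul Gp p.1 p.2)}.

(* open bisection: open B on which r and s are homeomorphisms onto open
   subsets of G^(0) (continuity is global; we require injectivity on B and
   openness of the restrictions) *)
Definition open_bisection (B : set G) : Prop :=
  open B /\
  {in B &, injective (grng Gp)} /\ {in B &, injective (gsrc Gp)} /\
  (forall V, open V -> V `<=` B ->
     open_in_units (grng Gp @` V) /\ open_in_units (gsrc Gp @` V)).

Definition compact_open_bisection (B : set G) : Prop :=
  compact B /\ open_bisection B.

Definition ample : Prop :=
  forall (U : set G) (x : G), open U -> U x ->
    exists B, compact_open_bisection B /\ B x /\ B `<=` U.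

Definition isotropy : set G := [set g | grng Gp g = gsrc Gp g].

Definition effective : Prop := interior isotropy = units.

Definition invariant (U : set G) : Prop :=
  U `<=` units /\ forall g, (U (gsrc Gp g) <-> U (grng Gp g)).

Definition minimal : Prop :=
  forall U, open_in_units U -> invariant U -> U = set0 \/ U = units.

Variable F : fieldType.

(* continuous 2-cocycle G^(2) -> F_d^x, F_d discrete: continuity into a
   discrete space is local constancy on the subspace G^(2) of G x G *)
Definition cocycle (sigma : G -> G -> F) : Prop :=
  (forall a b, composable a b -> sigma a b != 0) /\
  (forall a b, composable a b ->
     exists W : set (G * G), open W /\ W (a, b) /\
       forall p, W p -> composable p.1 p.2 -> sigma p.1 p.2 = sigma a b) /\
  (forall a b c, composable a b -> composable b c ->
     sigma a b * sigma (gmul Gp a b) c = sigma a (gmul Gp b c) * sigma b c) /\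
  (forall g, sigma (grng Gp g) g = 1 /\ sigma g (gsrc Gp g) = 1).

(* locally constant (i.e. continuous into the discrete field) *)
Definition locally_constant (f : G -> F) : Prop :=
  forall x, exists W : set G, open W /\ W x /\ forall y, W y -> f y = f x.

Definition fsupport (f : G -> F) : set G := [set x | f x != 0].

Definition steinberg (f : G -> F) : Prop :=
  locally_constant f /\ compact (closure (fsupport f)).

Definition conv (sigma : G -> G -> F) (f g : G -> F) : G -> F :=
  fun gamma => \sum_(p \in [set p : G * G | composable p.1 p.2 /\ gmul Gp p.1 p.2 = gamma])
      (sigma p.1 p.2 * f p.1 * g p.2).

Definition ideal (sigma : G -> G -> F) (I : set (G -> F)) : Prop :=
  I `<=` steinberg /\ I (fun _ => 0) /\
  (forall f g, I f -> I g -> I (fun x => f x - g x)) /\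
  (forall f g, steinberg f -> I g -> I (conv sigma f g) /\ I (conv sigma g f)).

Definition simple_algebra (sigma : G -> G -> F) : Prop :=
  forall I, ideal sigma I -> I = [set (fun _ => 0)] \/ I = steinberg.

End GroupoidDefs.

(* If U is a nonempty proper open invariant subset of the unit space, the
   functions whose support has its sources in U form a nonzero proper ideal.

   Conversely let J be a nonzero ideal.  Multiplying an element of J by the
   indicator of a bisection gives h in J with h(x) <> 0 at a unit x.  The part of
   the support of h off the unit space is covered by finitely many bisections, and by
   effectiveness there is a compact open V in the unit space, near x, that none of
   their arrows maps into itself; then 1_V h 1_V is a nonzero multiple of 1_V, so
   1_V lies in J.  By minimality the saturation r(s^-1(V)) is the whole unit space,
   and for a compact open bisection C with s(C) in V the product
   (f_C 1_V) 1_{C^-1}, with f_C(a) = sigma(a, a^-1)^-1 on C, equals 1_{r(C)}.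
   Finitely many of these give 1_W in J for a compact open W in the unit space
   containing the sources of the support of any given k, and k = k 1_W. *)

From Pilot Require Import Defs.
From HB Require Import structures.
From mathcomp Require Import all_boot all_order all_algebra.
From mathcomp Require Import all_classical all_reals all_analysis.
From mathcomp Require Import finmap.
Set Implicit Arguments. Unset Strict Implicit. Unset Printing Implicit Defensive.
Import GRing.Theory.
Local Open Scope classical_set_scope.
Local Open Scope ring_scope.

(* [compact_cover] is only stated for pointed spaces. *)
Definition pointed_at {T : topologicalType} (x : T) : Type := T.
HB.instance Definition _ (T : topologicalType) (x : T) :=
  Topological.on (pointed_at x).
HB.instance Definition _ (T : topologicalType) (x : T) :=
  isPointed.Build (pointed_at x) x.

Lemma compact_finite_subcover (T : topologicalType) (A : set T) (I : choiceType)
    (D : set I) (f : I -> set T) :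
  compact A -> (forall i, D i -> open (f i)) -> A `<=` cover D f ->
  exists2 D' : {fset I}, {subset D' <= D} & A `<=` cover [set` D'] f.
Proof.
have [->|/set0P[a _] cA] := eqVneq A set0.
  by exists fset0 => [i|x []]; rewrite ?inE.
have : @compact (pointed_at a) A := cA.
by rewrite compact_cover; apply.
Qed.

Lemma open_box_nbhs (T U : topologicalType) (E : set (T * U)) a b :
  open E -> E (a, b) ->
  exists A B, [/\ open A, open B, A a, B b & A `*` B `<=` E].
Proof.
move=> oE Eab; have [[P Q] /= [nP nQ] PQE] : nbhs (a, b) E by exact: open_nbhs_nbhs.
move: nP nQ; rewrite !nbhsE => -[A [oA Aa] AP] [B [oB Bb] BQ].
by exists A, B; split => // -[x y] [/= /AP Px /BQ Qy]; exact: PQE.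
Qed.

Lemma within_continuous_open_nbhs (T U : topologicalType) (D : set T) (f : T -> U)
    p (N : set U) :
  {within D, continuous f} -> D p -> open N -> N (f p) ->
  exists E, [/\ open E, E p & forall q, E q -> D q -> N (f q)].
Proof.
move=> cf Dp oN Nfp.
have := cf p N; rewrite /= nbhs_simpl => /(_ (open_nbhs_nbhs (conj oN Nfp))).
rewrite /= {1}/nbhs /= -nbhs_subspace_in // /within /= nbhsE => -[E [oE Ep] EN].
by exists E; split => // q Eq; exact: EN.
Qed.

Lemma open_nbhs_subset (T : topologicalType) (A : set T) :
  (forall x, A x -> exists B, [/\ open B, B x & B `<=` A]) -> open A.
Proof.
move=> AB; rewrite openE => x /AB [B [oB Bx BA]].
by rewrite /interior nbhsE; exists B.
Qed.

Lemma closed_eq_fun (T U : topologicalType) (f g : T -> U) :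
  hausdorff_space U -> continuous f -> continuous g -> closed [set x | f x = g x].
Proof.
move=> hU cf cg x clx; apply: hU => A B nA nB.
have /clx [y [fgy [Ay By]]] : nbhs x (f @^-1` A `&` g @^-1` B).
  by apply: filterI; [exact: cf | exact: cg].
by exists (f y); split => //; rewrite fgy.
Qed.

Lemma closure_subset_closed (T : topologicalType) (A B : set T) :
  closed B -> A `<=` B -> closure A `<=` B.
Proof. by move=> cB AB x /(closureS AB); exact: cB. Qed.

Lemma continuous_fst (T U : topologicalType) : continuous (@fst T U).
Proof. by move=> p; exact: cvg_fst. Qed.

Lemma continuous_snd (T U : topologicalType) : continuous (@snd T U).
Proof. by move=> p; exact: cvg_snd. Qed.

Section LocallyConstant.
Variables (T : topologicalType) (F : fieldType).
Implicit Types (f g : T -> F) (A : set T).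

Lemma lc_cst (c : F) : locally_constant (fun _ : T => c).
Proof. by move=> x; exists setT; split => //; exact: openT. Qed.

Lemma lc_op2 (op : F -> F -> F) f g : locally_constant f -> locally_constant g ->
  locally_constant (fun x => op (f x) (g x)).
Proof.
move=> lf lg x; have [Wf [oWf [Wfx ef]]] := lf x; have [Wg [oWg [Wgx eg]]] := lg x.
exists (Wf `&` Wg); split; first exact: openI.
by split => // y [/ef -> /eg ->].
Qed.

Lemma lc_if A f g : open A -> closed A -> locally_constant f -> locally_constant g ->
  locally_constant (fun x => if `[< A x >] then f x else g x).
Proof.
move=> oA cA lf lg x; have [Wf [oWf [Wfx ef]]] := lf x; have [Wg [oWg [Wgx eg]]] := lg x.
have [Ax|nAx] := pselect (A x).
  exists (Wf `&` A); split; first exact: openI.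
  by split => // y [/ef -> Ay]; rewrite !asboolT.
exists (Wg `&` ~` A); split; first by apply: openI => //; exact: closed_openC.
by split => // y [/eg -> nAy]; rewrite !asboolF.
Qed.

Lemma lc_split_clopen A f : open A -> closed A -> locally_constant f ->
  exists f1 f2, [/\ f = (fun x => f1 x + f2 x), locally_constant f1, locally_constant f2,
    fsupport f1 `<=` A & fsupport f2 `<=` fsupport f `\` A].
Proof.
move=> oA cA lf; exists (fun x => if `[< A x >] then f x else 0).
exists (fun x => if `[< A x >] then 0 else f x); split.
- by apply: funext => x; case: `[< A x >]; rewrite ?addr0 ?add0r.
- by apply: lc_if => //; exact: lc_cst.
- by apply: lc_if => //; exact: lc_cst.
- move=> x; rewrite /fsupport /=.
  by have [//|nAx] := pselect (A x); rewrite asboolF ?eqxx.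
move=> x; rewrite /fsupport /=; have [Ax|nAx] := pselect (A x).
  by rewrite asboolT ?eqxx.
by rewrite asboolF.
Qed.

Definition indicator A (a : F) : T -> F := fun x => if `[< A x >] then a else 0.

Lemma indicatorT A a x : A x -> indicator A a x = a.
Proof. by move=> Ax; rewrite /indicator asboolT. Qed.

Lemma indicatorF A a x : ~ A x -> indicator A a x = 0.
Proof. by move=> nAx; rewrite /indicator asboolF. Qed.

Lemma indicator_neq0 A a x : indicator A a x != 0 -> A x.
Proof. by apply: contraPP => /indicatorF ->; rewrite eqxx. Qed.

Hypothesis hT : hausdorff_space T.

Lemma steinberg_compact_support f A :
  locally_constant f -> compact A -> fsupport f `<=` A -> steinberg f.
Proof.
move=> lf cA fA; split => //.
apply: (subclosed_compact _ cA); first exact: closed_closure.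
by apply: closure_subset_closed => //; exact: compact_closed.
Qed.

Lemma steinberg0 : steinberg (fun _ : T => 0 : F).
Proof.
apply: steinberg_compact_support; [exact: lc_cst | exact: compact0 |].
by move=> x; rewrite /fsupport /= eqxx.
Qed.

Lemma steinbergB f g : steinberg f -> steinberg g -> steinberg (fun x => f x - g x).
Proof.
move=> [lf cf] [lg cg]; apply: steinberg_compact_support (compactU cf cg) _.
  exact: (lc_op2 (fun a b => a - b)).
move=> x; rewrite /fsupport /= => nz.
have [fx0|fx0] := eqVneq (f x) 0; last by left; exact: subset_closure.
right; apply: subset_closure; apply: contra nz => /eqP ->.
by rewrite fx0 subrr.
Qed.

Lemma indicator_steinberg A a : compact A -> open A -> steinberg (indicator A a).
Proof.
move=> cA oA; apply: (steinberg_compact_support _ cA (@indicator_neq0 A a)).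
by apply: lc_if => //; [exact: compact_closed | exact: lc_cst | exact: lc_cst].
Qed.

End LocallyConstant.

Lemma fsbig_single (T : choiceType) (R : nmodType) (P : set T) (h : T -> R) p0 :
  P p0 -> (forall p, P p -> h p != 0 -> p = p0) -> \sum_(p \in P) h p = h p0.
Proof.
move=> Pp0 h0; rewrite -(fsbig_widen [set p0] P h) ?fsbig_set1 //; first by move=> x ->.
move=> p [Pp /= np0]; apply/eqP; apply: contraT => nz; exfalso; exact/np0/h0.
Qed.

Lemma fsbig_neq0_term (T : choiceType) (R : nmodType) (P : set T) (h : T -> R) :
  \sum_(p \in P) h p != 0 -> exists2 p, P p & h p != 0.
Proof.
apply: contraNP => nE; rewrite fsbig1 // => p Pp.
by apply/eqP; apply: contraT => nz; exfalso; apply: nE; exists p.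
Qed.

Section GroupoidAlgebra.
Variables (G : Type) (Gp : groupoid G).
Local Notation r := (grng Gp).
Local Notation s := (gsrc Gp).
Local Notation m := (gmul Gp).
Local Notation iv := (ginv Gp).

Lemma gmulKg a b : s a = r b -> m (iv a) (m a b) = b.
Proof. by move=> e; rewrite -gmulA ?gsrc_inv // gmulVl e gmul_rngl. Qed.

Lemma gmulKVg a b : r a = r b -> m a (m (iv a) b) = b.
Proof. by move=> e; rewrite -gmulA ?grng_inv ?gsrc_inv // gmulV e gmul_rngl. Qed.

Lemma gmulgK a b : s a = r b -> m (m a b) (iv b) = a.
Proof. by move=> e; rewrite gmulA ?grng_inv // gmulV -e gmul_srcr. Qed.

Lemma ginvK a : iv (iv a) = a.
Proof.
rewrite -{2}(gmulgK (esym (grng_inv Gp a))) gmulV -(gsrc_inv Gp a).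
by rewrite -grng_inv gmul_rngl.
Qed.

Lemma image_ginv (C : set G) : iv @` C = iv @^-1` C.
Proof.
apply/seteqP; split => [_ [c Cc <-]|x Cx]; first by rewrite /preimage /= ginvK.
by exists (iv x); rewrite ?ginvK.
Qed.

End GroupoidAlgebra.

Section SteinbergAlgebra.
Variables (F : fieldType) (G : topologicalType) (Gp : groupoid G).
Variable sigma : G -> G -> F.
Local Notation r := (grng Gp).
Local Notation s := (gsrc Gp).
Local Notation m := (gmul Gp).
Local Notation iv := (ginv Gp).
Local Notation U0 := (units Gp).
Local Notation cv := (Defs.conv Gp sigma).
Local Notation ind := (@indicator G F).

Lemma units_rng x : U0 (r x). Proof. exact: grng_rng. Qed.

Lemma units_src x : U0 (s x). Proof. exact: grng_src. Qed.

Lemma units_srcE u : U0 u -> s u = u.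
Proof. by move=> Uu; rewrite -{1}Uu gsrc_rng Uu. Qed.

Lemma units_mull u b : U0 u -> s u = r b -> m u b = b.
Proof. by move=> /units_srcE-> ->; rewrite gmul_rngl. Qed.

Lemma units_mulr a u : U0 u -> s a = r u -> m a u = a.
Proof. by move=> Uu; rewrite Uu => <-; rewrite gmul_srcr. Qed.

Lemma composable_inv a x : r a = r x -> composable Gp (iv a) x.
Proof. by rewrite /composable gsrc_inv. Qed.

Lemma composable_invr a : composable Gp a (iv a).
Proof. by rewrite /composable grng_inv. Qed.

Lemma composable_mulV a x : r a = r x -> composable Gp a (m (iv a) x).
Proof. by move=> e; rewrite /composable grng_mul ?grng_inv //; exact: composable_inv. Qed.

Hypothesis coc : cocycle Gp sigma.

Lemma sigma_rng g : sigma (r g) g = 1. Proof. by case: coc => _ [_ [_ /(_ g) []]]. Qed.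

Lemma sigma_src g : sigma g (s g) = 1. Proof. by case: coc => _ [_ [_ /(_ g) []]]. Qed.

Lemma sigma_neq0 a b : composable Gp a b -> sigma a b != 0.
Proof. by case: coc => + _; apply. Qed.

Lemma sigma_const_box a b : composable Gp a b ->
  exists A B, [/\ open A, open B, A a, B b &
    forall a' b', A a' -> B b' -> composable Gp a' b' -> sigma a' b' = sigma a b].
Proof.
move=> ab; case: coc => _ [/(_ a b ab) [W [oW [Wab eW]]] _].
have [A [B [oA oB Aa Bb ABW]]] := open_box_nbhs oW Wab.
by exists A, B; split => // a' b' Aa' Bb'; apply: (eW (a', b')); exact: ABW.
Qed.

Lemma conv_indicatorl (V : set G) (a : F) (f : G -> F) x : V `<=` U0 ->
  cv (ind V a) f x = ind V a (r x) * f x.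
Proof.
move=> VU; rewrite /Defs.conv (@fsbig_single _ _ _ _ (r x, x)) /= ?sigma_rng ?mul1r //.
  by split => //=; [rewrite /composable gsrc_rng | rewrite gmul_rngl].
move=> [a1 a2] /= [ca <-] nz.
have /VU Ua1 : V a1.
  by apply: (@indicator_neq0 _ _ _ a); apply: contraNneq nz => ->; rewrite mulr0 mul0r.
by rewrite units_mull // -ca units_srcE.
Qed.

Lemma conv_indicatorr (V : set G) (a : F) (f : G -> F) x : V `<=` U0 ->
  cv f (ind V a) x = f x * ind V a (s x).
Proof.
move=> VU; rewrite /Defs.conv (@fsbig_single _ _ _ _ (x, s x)) /= ?sigma_src ?mul1r //.
  by split => //=; [rewrite /composable grng_src | rewrite gmul_srcr].
move=> [a1 a2] /= [ca <-] nz.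
have /VU Ua2 : V a2.
  by apply: (@indicator_neq0 _ _ _ a); apply: contraNneq nz => ->; rewrite mulr0.
by rewrite units_mulr // ca Ua2.
Qed.

Lemma conv_bisection (B : set G) (f g : G -> F) a x :
  {in B &, injective r} -> fsupport f `<=` B -> B a -> r a = r x ->
  cv f g x = sigma a (m (iv a) x) * f a * g (m (iv a) x).
Proof.
move=> injB fB Ba ea; rewrite /Defs.conv (@fsbig_single _ _ _ _ (a, m (iv a) x)) //=.
  by split => /=; [exact: composable_mulV | exact: gmulKVg].
move=> [a1 a2] /= [ca ex] nz.
have Ba1 : B a1 by apply: fB; apply: contraNneq nz => ->; rewrite mulr0 mul0r.
have ea1 : a1 = a by apply: injB; rewrite ?in_setE // ea -ex grng_mul.
by rewrite -ex ea1 gmulKg // -ea1.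
Qed.

Lemma conv_bisection0 (B : set G) (f g : G -> F) x :
  fsupport f `<=` B -> ~ (r @` B) (r x) -> cv f g x = 0.
Proof.
move=> fB nBx; rewrite /Defs.conv fsbig1 // => -[a1 a2] /= [ca ex].
have [->|/fB Ba1] := eqVneq (f a1) 0; first by rewrite mulr0 mul0r.
by exfalso; apply: nBx; exists a1; rewrite // -ex grng_mul.
Qed.

Definition conv_terms (f : G -> F) (x : G) : set (G * G) :=
  [set p | (composable Gp p.1 p.2 /\ m p.1 p.2 = x) /\ f p.1 != 0].

(* Finiteness matters: [\sum_(p \in P)] is [0] on sets with infinite support. *)
Lemma convDl (f1 f2 g : G -> F) x :
  finite_set (conv_terms f1 x) -> finite_set (conv_terms f2 x) ->
  cv (fun y => f1 y + f2 y) g x = cv f1 g x + cv f2 g x.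
Proof.
move=> fin1 fin2.
set P := [set p : G * G | composable Gp p.1 p.2 /\ m p.1 p.2 = x].
set A := conv_terms f1 x `|` conv_terms f2 x.
have finA : finite_set A by rewrite finite_setU.
have f0 p : P p -> ~ A p -> f1 p.1 = 0 /\ f2 p.1 = 0.
  by move=> Pp nAp; split; apply/eqP; apply: contraT => nz; exfalso; apply: nAp;
    [left | right].
have narrow (h : G * G -> F) : (forall p, P p -> ~ A p -> h p = 0) ->
    \sum_(p \in P) h p = \sum_(p \in A) h p.
  move=> h0; rewrite (fsbig_widen A P h) // => [p [[] | [] ] //|p [Pp nAp]].
  by rewrite /= h0.
rewrite /Defs.conv -/P !narrow -?fsbig_split //.
- by apply: eq_fsbigr => p _; rewrite mulrDr mulrDl.
- by move=> p /f0 f0p /f0p [_ ->]; rewrite mulr0 mul0r.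
- by move=> p /f0 f0p /f0p [-> _]; rewrite mulr0 mul0r.
- by move=> p /f0 f0p /f0p [-> ->]; rewrite addr0 mulr0 mul0r.
Qed.

Lemma conv_terms_bisection (B : set G) (f : G -> F) x :
  {in B &, injective r} -> fsupport f `<=` B -> finite_set (conv_terms f x).
Proof.
move=> injB fB.
have [[p0 Tp0]|nT] := pselect (exists p, conv_terms f x p); last first.
  by apply: (@sub_finite_set _ _ set0) => // p Tp; apply: nT; exists p.
apply: (@sub_finite_set _ _ [set p0]) => // p Tp.
have eq_term q : conv_terms f x q -> q = (q.1, m (iv q.1) x) /\ B q.1 /\ r q.1 = r x.
  move=> [[cq eq] nz]; split; last split; [|exact: fB|by rewrite -eq grng_mul].
  by rewrite -eq gmulKg // -surjective_pairing.
have [-> [B1 r1]] := eq_term p Tp; have [-> [B0 r0]] := eq_term p0 Tp0.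
by rewrite (injB p.1 p0.1) ?in_setE // r1.
Qed.

Hypotheses (hT : hausdorff_space G) (tG : topological_groupoid Gp).

Lemma continuous_src : continuous s. Proof. by case: tG. Qed.
Lemma continuous_rng : continuous r. Proof. by case: tG => _ []. Qed.
Lemma continuous_inv : continuous iv. Proof. by case: tG => _ [_ []]. Qed.
Lemma continuous_mul : {within G2 Gp, continuous (fun p : G * G => m p.1 p.2)}.
Proof. by case: tG => _ [_ [_]]. Qed.

Lemma units_closed : closed U0.
Proof. exact: closed_eq_fun hT continuous_rng (fun x => cvg_id). Qed.

Lemma composable_closed : closed (G2 Gp).
Proof.
apply: (closed_eq_fun hT (f := s \o fst) (g := r \o snd)) => p.
  by apply: continuous_comp; [exact: continuous_fst | exact: continuous_src].
by apply: continuous_comp; [exact: continuous_snd | exact: continuous_rng].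
Qed.

Lemma compact_image (f : G -> G) (K : set G) :
  continuous f -> compact K -> compact (f @` K).
Proof. by move=> cf cK; apply: continuous_compact => //; exact: continuous_subspaceT. Qed.

Lemma gmul_box a b (N : set G) : composable Gp a b -> open N -> N (m a b) ->
  exists A B, [/\ open A, open B, A a, B b &
    forall a' b', A a' -> B b' -> composable Gp a' b' -> N (m a' b')].
Proof.
move=> ab oN Nab.
have [E [oE Eab EN]] :=
  within_continuous_open_nbhs continuous_mul (ab : G2 Gp (a, b)) oN Nab.
have [A [B [oA oB Aa Bb ABE]]] := open_box_nbhs oE Eab.
by exists A, B; split => // a' b' Aa' Bb' ab'; apply: (EN (a', b')) => //; exact: ABE.
Qed.

Lemma conv_bisection_near (B : set G) (f g : G -> F) a0 x0 : open_bisection Gp B ->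
  locally_constant f -> fsupport f `<=` B -> locally_constant g -> B a0 -> r a0 = r x0 ->
  exists W, [/\ open W, W x0 & forall y, W y -> cv f g y = cv f g x0].
Proof.
move=> [oB [injB [_ imB]]] lf fB lg Ba0 ea0.
have [Wf [oWf [Wfa0 ef]]] := lf a0.
have [Wg [oWg [Wgb0 eg]]] := lg (m (iv a0) x0).
have [A1 [A2 [oA1 oA2 A1a0 A2b0 eA]]] := sigma_const_box (composable_mulV ea0).
have [E1 [E2 [oE1 oE2 E1a0 E2x0 eE]]] :=
  gmul_box (composable_inv ea0) (openI oWg oA2) (conj Wgb0 A2b0).
set O := Wf `&` A1 `&` iv @^-1` E1 `&` B.
have oO : open O.
  by do 3?apply: openI => //; exact: (proj1 (continuousP _) continuous_inv _ oE1).
have [Z [oZ eZ]] := (imB O oO (fun y Oy => Oy.2)).1.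
exists (E2 `&` r @^-1` Z); split.
- by apply: openI => //; exact: (proj1 (continuousP _) continuous_rng _ oZ).
- split => //; have : (r @` O) (r x0) by exists a0 => //; do 3?split.
  by rewrite eZ => -[].
move=> y [E2y Zy].
have [a [[[Wfa A1a] E1a] Ba] ea] : (r @` O) (r y).
  by rewrite eZ; split => //; exact: units_rng.
have [Wgb A2b] := eE _ _ E1a E2y (composable_inv ea).
rewrite (conv_bisection _ injB fB Ba ea) (conv_bisection _ injB fB Ba0 ea0).
by rewrite (eA a) ?(ef a) ?(eg (m (iv a) y)) //; exact: composable_mulV.
Qed.

Lemma lc_conv_bisection (B : set G) (f g : G -> F) : compact B -> open_bisection Gp B ->
  locally_constant f -> fsupport f `<=` B -> locally_constant g ->
  locally_constant (cv f g).
Proof.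
move=> cB bB lf fB lg x0.
have [[a0 Ba0 ea0]|nBx0] := pselect ((r @` B) (r x0)).
  have [W [oW Wx0 eW]] := conv_bisection_near bB lf fB lg Ba0 ea0.
  by exists W.
have cBr : closed (r @` B).
  by apply: compact_closed => //; exact: compact_image continuous_rng cB.
exists (r @^-1` (~` (r @` B))); split.
  by apply: (proj1 (continuousP _) continuous_rng); exact: closed_openC.
by split => // y nBy; rewrite !(conv_bisection0 _ fB).
Qed.

Lemma lc_conv_bisections (g : G -> F) (L : seq (set G)) (f : G -> F) :
  locally_constant g -> (forall B, B \in L -> compact B /\ open_bisection Gp B) ->
  locally_constant f -> fsupport f `<=` [set y | exists2 B, B \in L & B y] ->
  locally_constant (cv f g) /\ forall x, finite_set (conv_terms f x).
Proof.
move=> lg; elim: L f => [|B L IH] f bL lf fL.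
  have -> : f = fun _ => 0.
    by apply: funext => y; apply/eqP; apply: contraT => /fL [B]; rewrite in_nil.
  have -> : cv (fun _ => 0) g = fun _ => 0.
    by apply: funext => x; rewrite /Defs.conv fsbig1 // => p _; rewrite mulr0 mul0r.
  split=> [|x]; first exact: lc_cst.
  by apply: (@sub_finite_set _ _ set0) => // p [_]; rewrite eqxx.
have [cB bB] := bL B (mem_head _ _); have [oB [injB _]] := bB.
have [f1 [f2 [ef lf1 lf2 f1B f2fB]]] := lc_split_clopen oB (compact_closed hT cB) lf.
have f2L : fsupport f2 `<=` [set y | exists2 B, B \in L & B y].
  move=> y /f2fB [fy nBy]; have [B' /[!in_cons] /orP[/eqP eB'|B'L] B'y] := fL y fy.
    by exfalso; apply: nBy; rewrite -eB'.
  by exists B'.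
have bL' B' : B' \in L -> compact B' /\ open_bisection Gp B'.
  by move=> B'L; apply: bL; rewrite in_cons B'L orbT.
have [lc2 fin2] := IH f2 bL' lf2 f2L.
have fin1 x : finite_set (conv_terms f1 x) := conv_terms_bisection x injB f1B.
rewrite ef; split => [|x].
  rewrite (_ : cv _ g = fun x => cv f1 g x + cv f2 g x).
    exact: (lc_op2 +%R (lc_conv_bisection cB bB lf1 f1B lg) lc2).
  by apply: funext => x; rewrite convDl.
apply: (@sub_finite_set _ _ (conv_terms f1 x `|` conv_terms f2 x));
  last by rewrite finite_setU.
move=> p [Pp nz]; have [z1|nz1] := eqVneq (f1 p.1) 0; last by left.
by right; split => //; move: nz; rewrite z1 add0r.
Qed.

Lemma conv_compact (f g : G -> F) : steinberg f -> steinberg g ->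
  compact (closure (fsupport (cv f g))).
Proof.
move=> [_ cf] [_ cg].
set M := (closure (fsupport f) `*` closure (fsupport g)) `&` G2 Gp.
have cM : compact M.
  by apply: compact_closedI; [exact: compact_setX | exact: composable_closed].
have cmM : compact ((fun p : G * G => m p.1 p.2) @` M).
  apply: continuous_compact => //.
  by apply: (continuous_subspaceW _ continuous_mul) => p [].
apply: (subclosed_compact _ cmM); first exact: closed_closure.
apply: closure_subset_closed; first exact: compact_closed.
move=> x /fsbig_neq0_term [[a b] /= [ab <-] nz].
exists (a, b) => //; split => //; split; apply: subset_closure; rewrite /fsupport /=.
  by apply: contraNneq nz => ->; rewrite mulr0 mul0r.
by apply: contraNneq nz => ->; rewrite mulr0.
Qed.

Hypothesis amp : ample Gp.

Lemma conv_steinberg (f g : G -> F) : steinberg f -> steinberg g -> steinberg (cv f g).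
Proof.
move=> sf sg; split; last exact: conv_compact.
have [lf cf] := sf.
set D := [set B : set G | compact_open_bisection Gp B].
have cov : closure (fsupport f) `<=` cover D id.
  by move=> x _; have [B [bB [Bx _]]] := amp openT (I : setT x); exists B.
have [D' D'D cov'] := compact_finite_subcover cf (fun B (DB : D B) => DB.2.1) cov.
have bD' B : B \in (D' : seq _) -> compact B /\ open_bisection Gp B.
  by move=> /D'D; rewrite in_setE.
have fD' : fsupport f `<=` [set y | exists2 B, B \in (D' : seq _) & B y].
  by move=> y /subset_closure /cov' [B D'B By]; exists B.
exact: (lc_conv_bisections sg.1 bD' lf fD').1.
Qed.

Definition source_ideal (U : set G) : set (G -> F) :=
  [set f | steinberg f /\ forall x, f x != 0 -> U (s x)].

Lemma source_ideal_ideal U : Defs.invariant Gp U -> ideal Gp sigma (source_ideal U).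
Proof.
move=> [_ invU]; split; first by move=> f [].
split; first by split; [exact: steinberg0 | move=> x; rewrite eqxx].
split.
  move=> f g [sf Uf] [sg Ug]; split; first exact: steinbergB.
  move=> x; have [fx0|/Uf//] := eqVneq (f x) 0.
  by rewrite fx0 sub0r oppr_eq0; exact: Ug.
move=> f g sf [sg Ug]; split; split; try exact: conv_steinberg.
  move=> x /fsbig_neq0_term [[a b] /= [ab <-] nz]; rewrite gsrc_mul //.
  by apply: Ug; apply: contraNneq nz => ->; rewrite mulr0.
move=> x /fsbig_neq0_term [[a b] /= [ab <-] nz]; rewrite gsrc_mul //.
by apply/invU; rewrite -ab; apply: Ug; apply: contraNneq nz => ->; rewrite mulr0 mul0r.
Qed.

Hypothesis eff : effective Gp.

Lemma units_open : open U0.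
Proof. by rewrite -eff; exact: open_interior. Qed.

Lemma simple_minimal : simple_algebra Gp sigma -> minimal Gp.
Proof.
move=> simp U [V [oV ->]] invU.
have [J0|Jst] := simp _ (source_ideal_ideal invU).
  left; apply/seteqP; split => // u [Vu Uu].
  have [B [[cB [oB _]] [Bu BVU]]] := amp (openI oV units_open) (conj Vu Uu).
  have : source_ideal (V `&` U0) (ind B 1).
    split; first exact: indicator_steinberg.
    by move=> x /indicator_neq0 /BVU [Vx Ux]; rewrite units_srcE.
  rewrite J0 => /(congr1 (fun h => h u)) /eqP.
  by rewrite indicatorT // oner_eq0.
right; apply/seteqP; split => [u []//|u Uu].
have [B [[cB [oB _]] [Bu _]]] := amp openT (I : setT u).
have : source_ideal (V `&` U0) (ind B 1) by rewrite Jst; exact: indicator_steinberg.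
by case=> _ /(_ u); rewrite indicatorT // oner_eq0 units_srcE //; exact.
Qed.

Lemma open_in_units_open (U : set G) : open_in_units Gp U -> open U.
Proof. by case=> V [oV ->]; exact: openI oV units_open. Qed.

Lemma bisection_rng_open (B V : set G) : open_bisection Gp B -> open V -> V `<=` B ->
  open (r @` V).
Proof.
by move=> [_ [_ [_ imB]]] oV VB; apply: open_in_units_open; exact: (imB V oV VB).1.
Qed.

Lemma bisection_src_open (B V : set G) : open_bisection Gp B -> open V -> V `<=` B ->
  open (s @` V).
Proof.
by move=> [_ [_ [_ imB]]] oV VB; apply: open_in_units_open; exact: (imB V oV VB).2.
Qed.

Lemma effective_nonisotropic (O : set G) g : open O -> O g -> ~ U0 g ->
  exists2 d, O d & r d <> s d.
Proof.
move=> oO Og nUg; apply: contrapT => nd; apply: nUg; rewrite -eff.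
have Oiso : O `<=` isotropy Gp.
  by move=> d Od; apply: contrapT => nrs; apply: nd; exists d.
by apply: (filterS Oiso); exact: open_nbhs_nbhs.
Qed.

(* Effectiveness gives [d] in [B] over [W] with [r d <> s d]; separating [r d]
   from [s d] by open sets, the sources of the arrows of [B] near [d] form [V]. *)
Lemma effective_avoid_bisection (B W : set G) : open_bisection Gp B -> B `<=` ~` U0 ->
  open W -> W !=set0 -> W `<=` U0 ->
  exists V, [/\ open V, V !=set0, V `<=` W & forall g, B g -> ~ (V (r g) /\ V (s g))].
Proof.
move=> bB BU oW [w Ww] WU; have [oB [_ [injs _]]] := bB.
have [[g0 [Bg0 Wg0]]|nBW] := pselect (exists g, B g /\ W (s g)); last first.
  by exists W; split => //; [exists w | move=> g Bg [_ Wsg]; apply: nBW; exists g].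
have oBW : open (B `&` s @^-1` W).
  by apply: openI => //; exact: (proj1 (continuousP _) continuous_src).
have [d [Bd Wsd] nd] := effective_nonisotropic oBW (conj Bg0 Wg0) (BU g0 Bg0).
have nx : r d != s d by apply/eqP.
move: hT; rewrite open_hausdorff => /(_ _ _ nx) [[P Q] /= [Prd Qsd] [oP oQ /eqP PQ0]].
rewrite !in_setE in Prd Qsd.
set B' := B `&` s @^-1` W `&` r @^-1` P `&` s @^-1` Q.
have oB' : open B'.
  by do 3?apply: openI => //; apply: (proj1 (continuousP _)) => //;
    [exact: continuous_rng | exact: continuous_src].
exists (s @` B'); split.
- exact: bisection_src_open bB oB' (fun y By => By.1.1.1).
- by exists (s d), d.
- by move=> _ [y [[[_ Wsy] _] _] <-].
move=> g Bg [[y [_ Qsy] ey] [y' [[[By' _] Pry'] _] ey']].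
have egy' : g = y' by apply: injs; rewrite ?in_setE.
have : (P `&` Q) (r g) by split; [rewrite egy' | rewrite -ey].
by rewrite PQ0.
Qed.

Lemma effective_avoid_bisections (L : seq (set G)) (W : set G) :
  (forall B, B \in L -> open_bisection Gp B /\ B `<=` ~` U0) ->
  open W -> W !=set0 -> W `<=` U0 ->
  exists V, [/\ open V, V !=set0, V `<=` W &
    forall B g, B \in L -> B g -> ~ (V (r g) /\ V (s g))].
Proof.
elim: L W => [|B L IH] W bL oW nW WU; first by exists W; split => // B g; rewrite in_nil.
have [bB BU] := bL B (mem_head _ _).
have [V1 [oV1 nV1 V1W BV1]] := effective_avoid_bisection bB BU oW nW WU.
have bL' B' : B' \in L -> open_bisection Gp B' /\ B' `<=` ~` U0.
  by move=> B'L; apply: bL; rewrite in_cons B'L orbT.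
have [V [oV nV VV1 LV]] := IH V1 bL' oV1 nV1 (subset_trans V1W WU).
exists V; split => //; first exact: subset_trans VV1 V1W.
move=> B' g /[!in_cons] /orP[/eqP -> Bg [Vrg Vsg]|]; last exact: LV.
by apply: (BV1 g Bg); split; apply: VV1.
Qed.

Lemma conv_indicator_sandwich (V : set G) (h : G -> F) c :
  V `<=` U0 -> c != 0 -> (forall u, V u -> h u = c) ->
  (forall g, ~ U0 g -> V (r g) -> V (s g) -> h g = 0) ->
  cv (cv (ind V c^-1) h) (ind V 1) = ind V 1.
Proof.
move=> VU c0 hV h0; apply: funext => z; rewrite conv_indicatorr // conv_indicatorl //.
have [[Vrz Vsz]|nV] := pselect (V (r z) /\ V (s z)).
  rewrite [ind V c^-1 _]indicatorT // [ind V 1 (s z)]indicatorT // mulr1.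
  have [Uz|nUz] := pselect (U0 z).
    have Vz : V z by rewrite -Uz.
    by rewrite indicatorT // hV // mulVf.
  by rewrite indicatorF ?h0 ?mulr0 // => /VU.
have nVz : ~ V z by move=> Vz; apply: nV; rewrite VU // units_srcE; [split | exact: VU].
rewrite (indicatorF 1 nVz); have [Vrz|nVrz] := pselect (V (r z)).
  by rewrite [ind V 1 (s z)]indicatorF ?mulr0 // => Vsz; apply: nV.
by rewrite [ind V c^-1 (r z)]indicatorF ?mul0r.
Qed.

Lemma lc_sigma_inv : locally_constant (fun a => (sigma a (iv a))^-1).
Proof.
move=> a; have [A1 [A2 [oA1 oA2 A1a A2a eA]]] := sigma_const_box (composable_invr a).
exists (A1 `&` iv @^-1` A2); split.
  by apply: openI => //; exact: (proj1 (continuousP _) continuous_inv).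
split => // y [A1y A2y]; rewrite (eA y (iv y)) //; exact: composable_invr.
Qed.

Definition cocycle_inv_on (C : set G) : G -> F :=
  fun a => if `[< C a >] then (sigma a (iv a))^-1 else 0.

Lemma cocycle_inv_on_steinberg (C : set G) : compact C -> open C ->
  steinberg (cocycle_inv_on C).
Proof.
move=> cC oC; apply: (steinberg_compact_support hT _ cC) => [|y].
  by apply: lc_if => //; [exact: compact_closed | exact: lc_sigma_inv | exact: lc_cst].
rewrite /fsupport /cocycle_inv_on /=.
by have [//|nC] := pselect (C y); rewrite asboolF // eqxx.
Qed.

(* Twisted form of [C C^-1 = r(C)] for a bisection [C]; the coefficients of
   [cocycle_inv_on C] cancel the cocycle. *)
Lemma conv_bisection_inv (C : set G) : {in C &, injective r} -> {in C &, injective s} ->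
  cv (cocycle_inv_on C) (ind (iv @` C) 1) = ind (r @` C) 1.
Proof.
move=> injr injs; apply: funext => z.
have term p : composable Gp p.1 p.2 ->
    sigma p.1 p.2 * cocycle_inv_on C p.1 * ind (iv @` C) 1 p.2 != 0 ->
    C p.1 /\ p.2 = iv p.1.
  move=> cp nz; have Cp1 : C p.1.
    by apply: contraPP nz => nC; rewrite /cocycle_inv_on asboolF // mulr0 mul0r eqxx.
  have [c Cc ec] : (iv @` C) p.2.
    by apply: (@indicator_neq0 G F _ 1); apply: contraNneq nz => ->; rewrite mulr0.
  have e : p.1 = c by apply: injs; rewrite ?in_setE // cp -ec grng_inv.
  by split => //; rewrite -ec e.
have [[a Ca <-]|nCz] := pselect ((r @` C) z); last first.
  rewrite [RHS]indicatorF // /Defs.conv fsbig1 // => p [cp ep].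
  apply/eqP; apply: contraT => /(term p cp) [Cp1 ep2]; exfalso; apply: nCz.
  by exists p.1; rewrite // -ep ep2 gmulV.
rewrite [RHS]indicatorT; last by exists a.
rewrite /Defs.conv (@fsbig_single _ _ _ _ (a, iv a)) /=.
- rewrite /cocycle_inv_on asboolT // indicatorT; last by exists a.
  by rewrite mulr1 mulfV // sigma_neq0 //; exact: composable_invr.
- by split; [exact: composable_invr | rewrite gmulV].
move=> p [cp ep] /(term p cp) [Cp1 ep2].
have ep1 : p.1 = a by apply: injr; rewrite ?in_setE // -(grng_mul cp) ep grng_rng.
by rewrite [p]surjective_pairing ep2 ep1.
Qed.

Definition saturation (V : set G) : set G := r @` (s @^-1` V).

Lemma saturation_invariant V : Defs.invariant Gp (saturation V).
Proof.
split=> [_ [g _ <-]|g]; first exact: units_rng.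
split=> -[h Vsh e].
  have gh : composable Gp g h by rewrite /composable e.
  by exists (m g h); rewrite /= ?gsrc_mul ?grng_mul.
have gh : composable Gp (iv g) h by rewrite /composable gsrc_inv e.
by exists (m (iv g) h); rewrite /= ?gsrc_mul ?grng_mul ?grng_inv.
Qed.

Lemma saturation_open V : open V -> open (saturation V).
Proof.
move=> oV; have oP : open (s @^-1` V) := proj1 (continuousP _) continuous_src _ oV.
apply: open_nbhs_subset => _ [g Vsg <-].
have [B [[_ bB] [Bg BP]]] := amp oP Vsg.
exists (r @` B); split; [exact: bisection_rng_open bB bB.1 _ | by exists g |].
by move=> _ [b Bb <-]; exists b => //; exact: BP.
Qed.

Lemma minimal_saturation V : minimal Gp -> open V -> V `<=` U0 -> V !=set0 ->
  saturation V = U0.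
Proof.
move=> mini oV VU [v Vv].
have satU : saturation V `<=` U0 by move=> _ [g _ <-]; exact: units_rng.
have oiu : open_in_units Gp (saturation V).
  by exists (saturation V); split; [exact: saturation_open | rewrite setIidl].
have [sat0|//] := mini _ oiu (saturation_invariant V).
have Uv := VU v Vv.
have : saturation V v by exists v; rewrite // /preimage /= units_srcE.
by rewrite sat0.
Qed.

Section IdealGeneration.
Variable J : set (G -> F).
Hypothesis idJ : ideal Gp sigma J.

Lemma ideal_steinberg f : J f -> steinberg f.
Proof. by case: idJ => + _; apply. Qed.

Lemma ideal0 : J (fun _ => 0).
Proof. by case: idJ => _ []. Qed.

Lemma idealB f g : J f -> J g -> J (fun x => f x - g x).
Proof. by case: idJ => _ [_ [+ _]]; apply. Qed.

Lemma ideal_convl f g : steinberg f -> J g -> J (cv f g).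
Proof. by case: idJ => _ [_ [_ Jconv]] sf Jg; case: (Jconv f g sf Jg). Qed.

Lemma ideal_convr f g : J f -> steinberg g -> J (cv f g).
Proof. by case: idJ => _ [_ [_ Jconv]] Jf sg; case: (Jconv g f sg Jf). Qed.

Lemma ideal_nonzero_at_unit f g0 : J f -> f g0 != 0 ->
  exists h x, [/\ J h, U0 x & h x != 0].
Proof.
move=> Jf fg0.
have [C [[cC [oC [_ [injs _]]]] [Cg0 _]]] := amp openT (I : setT (iv g0)).
exists (cv f (ind C 1)), (r g0); split; last 1 first.
- rewrite /Defs.conv (@fsbig_single _ _ _ _ (g0, iv g0)) /=.
  + by rewrite indicatorT // mulr1 mulf_neq0 // sigma_neq0 //; exact: composable_invr.
  + by split; [exact: composable_invr | rewrite gmulV].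
  move=> [a b] /= [ab ex] nz.
  have Cb : C b.
    by apply: (@indicator_neq0 G F _ 1); apply: contraNneq nz => ->; rewrite mulr0.
  have eb : b = iv g0.
    by apply: injs; rewrite ?in_setE // gsrc_inv -(gsrc_mul ab) ex gsrc_rng.
  have ea : a = g0 by rewrite -(gmulgK ab) ex eb ginvK gmul_rngl.
  by rewrite ea eb.
- exact: ideal_convr (indicator_steinberg hT _ cC oC).
- exact: units_rng.
Qed.

(* Cutting [h] down by the indicator of a small [V0] on both sides kills the part
   of [h] off the unit space, which by effectiveness can be kept away from [V0]. *)
Lemma ideal_unit_indicator h x : J h -> U0 x -> h x != 0 ->
  exists V, [/\ compact V, open V, V `<=` U0, V !=set0 & J (ind V 1)].
Proof.
move=> Jh Ux hx; have [lh ch] := ideal_steinberg Jh.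
have [W [oW [Wx eW]]] := lh x.
have oUc : open (~` U0) by exact: closed_openC units_closed.
set K := closure (fsupport h) `&` ~` U0.
have cK : compact K by apply: compact_closedI => //; exact: open_closedC units_open.
set D := [set B | compact_open_bisection Gp B /\ B `<=` ~` U0].
have cov : K `<=` cover D id.
  by move=> y [_ nUy]; have [B [bB [By BU]]] := amp oUc nUy; exists B.
have [D' D'D cov'] := compact_finite_subcover cK (fun B (DB : D B) => DB.1.2.1) cov.
have bD' B : B \in (D' : seq _) -> open_bisection Gp B /\ B `<=` ~` U0.
  by move=> /D'D; rewrite in_setE => -[[_ ?] ?].
have [V [oV [y Vy] VWU avoid]] := effective_avoid_bisections bD' (openI oW units_open)
  (ex_intro _ x (conj Wx Ux)) (fun _ p => p.2).
have [V0 [[cV0 [oV0 _]] [V0y V0V]]] := amp oV Vy.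
have V0U : V0 `<=` U0 by move=> z /V0V /VWU [].
exists V0; split => //; first by exists y.
rewrite -(@conv_indicator_sandwich V0 h (h x)) //.
- apply: ideal_convr; last exact: indicator_steinberg.
  by apply: ideal_convl => //; exact: indicator_steinberg.
- by move=> u /V0V /VWU [/eW].
move=> g nUg /V0V Vrg /V0V Vsg; apply/eqP; apply: contraT => hg.
have [B D'B Bg] : cover [set` D'] id g by apply: cov'; split => //; exact: subset_closure.
by exfalso; exact: (avoid B g D'B Bg).
Qed.

Lemma ideal_indicatorU (A B : set G) : A `<=` U0 -> B `<=` U0 -> steinberg (ind A 1) ->
  J (ind A 1) -> J (ind B 1) -> J (ind (A `|` B) 1).
Proof.
move=> AU BU sA JA JB.
have -> : ind (A `|` B) 1 = fun x => ind A 1 x - (cv (ind A 1) (ind B 1) x - ind B 1 x).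
  apply: funext => x; rewrite conv_indicatorl //.
  have [Bx|nBx] := pselect (B x).
    rewrite (BU x Bx) (indicatorT 1 Bx) [ind (A `|` B) 1 x]indicatorT; last by right.
    by rewrite mulr1 opprB addrC subrK.
  rewrite (indicatorF 1 nBx) mulr0 !subr0.
  have [Ax|nAx] := pselect (A x); first by rewrite !indicatorT //; left.
  by rewrite !indicatorF // => -[].
by apply: idealB => //; apply: idealB => //; exact: ideal_convl.
Qed.

Lemma ideal_indicator_range (V C : set G) : V `<=` U0 -> J (ind V 1) ->
  compact_open_bisection Gp C -> C `<=` s @^-1` V -> J (ind (r @` C) 1).
Proof.
move=> VU JV [cC bC] CV; have [oC [injr [injs _]]] := bC.
have JfC : J (cocycle_inv_on C).
  have <- : cv (cocycle_inv_on C) (ind V 1) = cocycle_inv_on C.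
    apply: funext => z; rewrite conv_indicatorr // /cocycle_inv_on.
    have [Cz|nCz] := pselect (C z); last by rewrite asboolF // mul0r.
    by rewrite asboolT // indicatorT ?mulr1 //; exact: CV.
  by apply: ideal_convl JV; exact: cocycle_inv_on_steinberg.
have cCi : compact (iv @` C) by exact: compact_image continuous_inv cC.
have oCi : open (iv @` C).
  by rewrite image_ginv; exact: (proj1 (continuousP _) continuous_inv).
by rewrite -conv_bisection_inv //; apply: ideal_convr => //; exact: indicator_steinberg.
Qed.

Lemma ideal_indicator_cover (V : set G) : minimal Gp -> open V -> V `<=` U0 -> V !=set0 ->
  J (ind V 1) -> forall S, compact S -> S `<=` U0 ->
  exists W, [/\ compact W, open W, W `<=` U0, S `<=` W & J (ind W 1)].
Proof.
move=> mini oV VU nV JV S cS SU.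
have oP : open (s @^-1` V) := proj1 (continuousP _) continuous_src _ oV.
set D := [set C | compact_open_bisection Gp C /\ C `<=` s @^-1` V].
have cov : S `<=` cover D (fun C => r @` C).
  move=> u /SU; rewrite -(minimal_saturation mini oV VU nV) => -[g Vsg <-].
  by have [C [bC [Cg CP]]] := amp oP Vsg; exists C => //; exists g.
have oD C : D C -> open (r @` C).
  by move=> [[_ bC] _]; exact: bisection_rng_open bC bC.1 _.
have [D' D'D cov'] := compact_finite_subcover cS oD cov.
set W := cover [set` D'] (fun C => r @` C).
suff [cW oW WU JW] : [/\ compact W, open W, W `<=` U0 & J (ind W 1)] by exists W.
rewrite /W /cover bigcup_fset big_seq.
apply: (big_ind (fun W => [/\ compact W, open W, W `<=` U0 & J (ind W 1)])).
- have -> : ind set0 1 = fun _ => 0 by apply: funext => x; rewrite indicatorF.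
  by split; [exact: compact0 | exact: open0 | | exact: ideal0].
- move=> A B [cA oA AU JA] [cB oB BU JB]; split; [exact: compactU | exact: openU | |].
    by move=> x [/AU|/BU].
  by apply: ideal_indicatorU => //; exact: indicator_steinberg.
move=> C /D'D; rewrite in_setE => -[[cC bC] CV]; split.
- exact: compact_image continuous_rng cC.
- exact: oD.
- by move=> _ [c _ <-]; exact: units_rng.
exact: ideal_indicator_range (conj cC bC) CV.
Qed.

End IdealGeneration.

Lemma minimal_simple : minimal Gp -> simple_algebra Gp sigma.
Proof.
move=> mini J idJ.
have [[f [Jf [g0 fg0]]]|J0] := pselect (exists f, J f /\ exists x, f x != 0); last first.
  left; apply/seteqP; split => [f Jf|_ ->]; last exact: ideal0 idJ.
  apply: funext => x; apply/eqP; apply: contraT => fx.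
  by exfalso; apply: J0; exists f; split => //; exists x.
right; apply/seteqP; split => [f' /(ideal_steinberg idJ) //|k sk].
have [h [x [Jh Ux hx]]] := ideal_nonzero_at_unit idJ Jf fg0.
have [V [cV oV VU nV JV]] := ideal_unit_indicator idJ Jh Ux hx.
have cS : compact (s @` closure (fsupport k)) by exact: compact_image continuous_src sk.2.
have SU : s @` closure (fsupport k) `<=` U0 by move=> _ [y _ <-]; exact: units_src.
have [W [cW oW WU SW JW]] := ideal_indicator_cover idJ mini oV VU nV JV cS SU.
have -> : k = cv k (ind W 1).
  apply: funext => z; rewrite conv_indicatorr //.
  have [->|kz] := eqVneq (k z) 0; first by rewrite mul0r.
  by rewrite indicatorT ?mulr1 //; apply: SW; exists z => //; exact: subset_closure.
exact: (ideal_convl idJ sk JW).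
Qed.

End SteinbergAlgebra.

Theorem theorem6p2 (F : fieldType) (G : topologicalType) (Gp : groupoid G)
  (sigma : G -> G -> F) :
  hausdorff_space G -> locally_compact [set: G] ->
  topological_groupoid Gp -> ample Gp -> effective Gp ->
  cocycle Gp sigma ->
  (simple_algebra Gp sigma <-> minimal Gp).
Proof.
move=> hT _ tG amp eff coc.
split; [exact: simple_minimal | exact: minimal_simple].
Qed.
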